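(* Let $\mathbb{K}$ be either $\mathbb{R}$ or $\mathbb{C}$, with all coefficients and solutions taken in $\mathbb{K}$. Let $(p,q)$ be a conjugate pair. Let $I$ be an infinite set. For all $i \in I$, let $\mathbf{a}_i = (a_{i,j})_{j=1}^{\infty} \in \ell^p$, let $b_i \in \mathbb{K}$, and consider the linear equation in infinitely many variables \[ L_i(\mathbf{x}) = \sum_{j=1}^{\infty} a_{i,j} x_j = b_i. \] Let $M>0$. Suppose that for every finite subset $S$ of $I$ and every $\varepsilon>0$, the finite set of inequalities $\{ |L_i(\mathbf{x}) - b_i| \le \varepsilon : i \in S\}$ has a solution $\mathbf{x}_{S,\varepsilon} \in \ell^q$ with $\|\mathbf{x}_{S,\varepsilon}\|_q \le M$. Then the infinite set of linear equations $\{L_i(\mathbf{x}) = b_i : i \in I\}$ has an exact solution $\mathbf{x} \in \ell^q$ with $\|\mathbf{x}\|_q \le M$.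
   Context: A pair $(p,q)$ is called a conjugate pair if either $p>1$, $q>1$ are real numbers with $1/p + 1/q = 1$, or $p=1$ and $q=\infty$. For $1\le p<\infty$, $\ell^p$ is the space of sequences $\mathbf{a}=(a_j)_{j\ge1}$ with $\|\mathbf{a}\|_p = (\sum_j |a_j|^p)^{1/p}<\infty$, and $\ell^\infty$ is the space of bounded sequences with $\|\mathbf{a}\|_\infty = \sup_j |a_j|$. For $\mathbf{a}\in\ell^p$, $\mathbf{x}\in\ell^q$ the series $\sum_j a_j x_j$ converges absolutely by Hölder's inequality. *)

From Stdlib Require Import Reals.
From Coquelicot Require Import Coquelicot.
Open Scope R_scope.

(* t^r for t >= 0, r > 0, with the convention 0^r = 0 *)
Definition rpow (t r : R) : R :=
  if Req_EM_T t 0 then 0 else Rpower t r.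

(* Exponents: p is a real number, q is in [1, +oo] (p_infty encodes q = oo). *)
Definition conjugate_pair (p : R) (q : Rbar) : Prop :=
  (1 < p /\ exists q' : R, q = Finite q' /\ 1 < q' /\ / p + / q' = 1)
  \/ (p = 1 /\ q = p_infty).

Definition in_lp {K : AbsRing} (r : Rbar) (x : nat -> K) : Prop :=
  match r with
  | Finite r' => ex_series (fun j => rpow (abs (x j)) r')
  | _ => exists B : R, forall j, abs (x j) <= B
  end.

(* the l^r norm (meaningful for x in l^r) *)
Definition lp_norm {K : AbsRing} (r : Rbar) (x : nat -> K) : R :=
  match r with
  | Finite r' => rpow (Series (fun j => rpow (abs (x j)) r')) (/ r')
  | _ => real (Sup_seq (fun j => Finite (abs (x j))))
  end.

Definition lin_sum_is {K : AbsRing} (a x : nat -> K) (l : K) : Prop :=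
  @is_series K (AbsRing_NormedModule K) (fun j => mult (a j) (x j)) l.

(* The closed ball B of radius M of l^q is compact for coordinatewise
   convergence: it is a closed subset of a product of discs (Tychonoff).  For
   i in I and e > 0 let C(i,e) be the set of x in B such that, for every N,
   |sum_(j <= N) a_ij x_j - b_i| <= e + M T whenever T bounds the l^p norm of
   (a_ij)_(j > N).  Each of these conditions involves finitely many
   coordinates, so C(i,e) is closed; by Hoelder's inequality on the tail, any
   x in B with |L_i(x) - b_i| <= e lies in C(i,e).  The hypothesis thus gives
   the finite intersection property, a point x lies in every C(i,e), and
   letting N go to infinity, then e to 0, yields L_i(x) = b_i. *)

From Stdlib Require Import Reals List Lra Lia.
From Coquelicot Require Import Coquelicot.
Open Scope R_scope.

Lemma rpow_0 r : rpow 0 r = 0.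
Proof. unfold rpow; destruct (Req_EM_T 0 0); [reflexivity|congruence]. Qed.

Lemma rpow_pos t r : 0 < t -> rpow t r = Rpower t r.
Proof. intro h; unfold rpow; destruct (Req_EM_T t 0); [lra|reflexivity]. Qed.

Lemma rpow_ge0 t r : 0 <= rpow t r.
Proof.
  unfold rpow; destruct (Req_EM_T t 0); [lra|].
  left; apply exp_pos.
Qed.

Lemma rpow_gt0 t r : 0 < t -> 0 < rpow t r.
Proof. intro h; rewrite rpow_pos by lra; apply exp_pos. Qed.

Lemma rpow_1 t : 0 <= t -> rpow t 1 = t.
Proof.
  intro h; destruct (Req_dec t 0) as [->|h0]; [apply rpow_0|].
  rewrite rpow_pos by lra; apply Rpower_1; lra.
Qed.

Lemma rpow_le s t r : 0 < r -> 0 <= s <= t -> rpow s r <= rpow t r.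
Proof.
  intros hr [hs hst]; destruct (Req_dec s 0) as [->|hs0].
  - rewrite rpow_0; apply rpow_ge0.
  - rewrite !rpow_pos by lra; apply Rle_Rpower_l; lra.
Qed.

Lemma rpow_lt s t r : 0 < r -> 0 <= s < t -> rpow s r < rpow t r.
Proof.
  intros hr [hs hst]; destruct (Req_dec s 0) as [->|hs0].
  - rewrite rpow_0; apply rpow_gt0; lra.
  - rewrite !rpow_pos by lra; apply Rlt_Rpower_l; lra.
Qed.

Lemma rpow_le_inv s t r : 0 < r -> 0 <= t -> rpow s r <= rpow t r -> s <= t.
Proof.
  intros hr ht h; destruct (Rle_lt_dec s t) as [|hlt]; [assumption|].
  pose proof (rpow_lt t s r hr (conj ht hlt)); lra.
Qed.

Lemma rpow_rpow_inv t r : r <> 0 -> 0 <= t -> rpow (rpow t r) (/ r) = t.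
Proof.
  intros hr ht; destruct (Req_dec t 0) as [->|h0]; [rewrite !rpow_0; reflexivity|].
  rewrite (rpow_pos t), rpow_pos by (try apply exp_pos; lra).
  rewrite Rpower_mult, Rinv_r by assumption; apply Rpower_1; lra.
Qed.

Lemma rpow_div s t r : 0 <= s -> 0 < t -> rpow (s / t) r = rpow s r / rpow t r.
Proof.
  intros hs ht; destruct (Req_dec s 0) as [->|hs0].
  { unfold Rdiv; rewrite Rmult_0_l, !rpow_0; ring. }
  assert (0 < / t) by (apply Rinv_0_lt_compat; lra).
  rewrite !rpow_pos by (try apply Rdiv_lt_0_compat; lra).
  unfold Rpower, Rdiv; rewrite ln_mult, ln_Rinv, <- exp_Ropp, <- exp_plus by lra.
  f_equal; ring.
Qed.

Lemma rpow_lower_semicontinuous t0 r e : 0 < r -> 0 <= t0 -> 0 < e ->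
  exists d, 0 < d /\ forall t, 0 <= t -> t0 - d < t -> rpow t0 r <= rpow t r + e.
Proof.
  intros hr ht0 he.
  destruct (Rle_lt_dec (rpow t0 r - e) 0) as [hle|hgt].
  { exists 1; split; [lra|]. intros t _ _; pose proof (rpow_ge0 t r); lra. }
  (* [s] is the point where [rpow _ r] drops to [rpow t0 r - e]. *)
  set (s := rpow (rpow t0 r - e) (/ r)).
  assert (hs : rpow s r = rpow t0 r - e).
  { pose proof (rpow_rpow_inv (rpow t0 r - e) (/ r)) as h.
    rewrite Rinv_inv in h; apply h; [apply Rinv_neq_0_compat|]; lra. }
  assert (hst : s < t0).
  { destruct (Rlt_le_dec s t0) as [|h]; [assumption|].
    pose proof (rpow_le t0 s r hr (conj ht0 h)); lra. }
  exists (t0 - s); split; [lra|]; intros t ht hlt.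
  assert (0 <= s) by apply rpow_ge0.
  pose proof (rpow_le s t r hr ltac:(lra)); lra.
Qed.

Lemma Rle_plus_scaled_epsilon v c C : 0 <= C ->
  (forall d, 0 < d -> v <= c + C * d) -> v <= c.
Proof.
  intros hC h; apply Rle_plus_epsilon; intros e he.
  specialize (h (e / (C + 1)) ltac:(apply Rdiv_lt_0_compat; lra)).
  assert (C * (e / (C + 1)) <= e).
  { unfold Rdiv; rewrite <- Rmult_assoc; apply Rmult_le_reg_r with (C + 1); [lra|].
    rewrite Rmult_assoc, Rinv_l by lra; nra. }
  lra.
Qed.

Lemma exists_common_delta (P : nat -> R -> Prop) n :
  (forall j d d', 0 < d' <= d -> P j d -> P j d') ->
  (forall j, (j <= n)%nat -> exists d, 0 < d /\ P j d) ->
  exists d, 0 < d /\ forall j, (j <= n)%nat -> P j d.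
Proof.
  intros hmono h; induction n as [|n IH].
  - destruct (h 0%nat (le_n 0)) as [d [hd Pd]]; exists d; split; [exact hd|].
    intros j hj; replace j with 0%nat by lia; exact Pd.
  - destruct IH as [d1 [hd1 P1]]; [intros j hj; apply h; lia|].
    destruct (h (S n) (le_n _)) as [d2 [hd2 P2]].
    assert (hd : 0 < Rmin d1 d2) by (apply Rmin_glb_lt; assumption).
    exists (Rmin d1 d2); split; [exact hd|]; intros j hj.
    destruct (Nat.eq_dec j (S n)) as [->|hne].
    + apply (hmono _ d2); [split; [exact hd | apply Rmin_r] | exact P2].
    + apply (hmono _ d1); [split; [exact hd | apply Rmin_l] | apply P1; lia].
Qed.

Lemma sum_n_m_nonneg (a : nat -> R) n m : (forall k, 0 <= a k) -> 0 <= sum_n_m a n m.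
Proof.
  intro h; pose proof (sum_n_m_le (fun _ => 0) a n m h) as h0.
  rewrite sum_n_m_const in h0; lra.
Qed.

Lemma sum_n_m_le_sum_n (a : nat -> R) n m : (forall k, 0 <= a k) ->
  sum_n_m a n m <= sum_n a m.
Proof.
  intro h; destruct n as [|n]; [unfold sum_n; lra|].
  destruct (Compare_dec.le_lt_dec (S n) m) as [hle|hlt].
  - unfold sum_n; rewrite (sum_n_m_Chasles a 0 n m) by lia.
    pose proof (sum_n_m_nonneg a 0 n h); unfold plus; simpl; lra.
  - rewrite sum_n_m_zero by lia; apply sum_n_m_nonneg, h.
Qed.

Lemma sum_n_m_Rmult_l (c : R) (f : nat -> R) n m :
  sum_n_m (fun k => c * f k) n m = c * sum_n_m f n m.
Proof. exact (sum_n_m_mult_l c f n m). Qed.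

Lemma sum_n_incr (a : nat -> R) : (forall k, 0 <= a k) ->
  forall n, sum_n a n <= sum_n a (S n).
Proof.
  intros h n; rewrite sum_Sn; pose proof (h (S n)).
  change (sum_n a n <= sum_n a n + a (S n)); lra.
Qed.

Lemma sum_n_le_loc (f g : nat -> R) n : (forall k, (k <= n)%nat -> f k <= g k) ->
  sum_n f n <= sum_n g n.
Proof.
  induction n as [|n IH]; intro h; [rewrite !sum_O; apply h; lia|].
  rewrite !sum_Sn; apply Rplus_le_compat; [apply IH; intros k hk|]; apply h; lia.
Qed.

Lemma sum_n_plus_const (f : nat -> R) c n :
  sum_n (fun j => f j + c) n = sum_n f n + INR (S n) * c.
Proof.
  unfold sum_n; rewrite (sum_n_m_plus f (fun _ => c)), sum_n_m_const, Nat.sub_0_r.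
  reflexivity.
Qed.

Lemma ex_series_tail_le (u : nat -> R) : ex_series u ->
  forall eta, 0 < eta -> exists N0, forall N, (N0 <= N)%nat -> forall m, sum_n_m u (S N) m <= eta.
Proof.
  intros hs eta heta.
  destruct (Cauchy_ex_series (V := R_CompleteNormedModule) _ hs (mkposreal _ heta)) as [N0 HN0].
  exists N0; intros N hN m.
  destruct (Compare_dec.le_lt_dec (S N) m) as [hm|hm].
  - specialize (HN0 (S N) m ltac:(lia) ltac:(lia)); simpl in HN0.
    eapply Rle_trans; [apply Rle_abs | left; exact HN0].
  - rewrite sum_n_m_zero by lia; left; exact heta.
Qed.

Lemma abs_minus_triangle {K : AbsRing} (x y z : K) :
  abs (minus x z) <= abs (minus x y) + abs (minus y z).
Proof. rewrite (minus_trans y); apply abs_triangle. Qed.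

Lemma abs_le_plus_abs_minus {K : AbsRing} (x y : K) : abs x <= abs y + abs (minus x y).
Proof.
  pose proof (norm_triangle_inv (V := AbsRing_NormedModule K) x y) as h.
  apply Rle_trans with (abs y + Rabs (abs x - abs y)).
  - pose proof (Rle_abs (abs x - abs y)); lra.
  - apply Rplus_le_compat_l, h.
Qed.

Lemma minus_plus_plus {G : AbelianGroup} (u v u' v' : G) :
  minus (plus u v) (plus u' v') = plus (minus u u') (minus v v').
Proof.
  unfold minus; rewrite opp_plus, <- !plus_assoc; f_equal.
  rewrite (plus_comm v), <- plus_assoc; f_equal; apply plus_comm.
Qed.

Lemma abs_minus_sum_n_le {K : AbsRing} (f g : nat -> K) N :
  abs (minus (sum_n f N) (sum_n g N)) <= sum_n (fun j => abs (minus (f j) (g j))) N.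
Proof.
  induction N as [|N IH]; [rewrite !sum_O; lra|].
  rewrite !sum_Sn, (minus_plus_plus (G := AbsRing.AbelianGroup K)).
  eapply Rle_trans; [apply abs_triangle|]; apply Rplus_le_compat; [exact IH | lra].
Qed.

Lemma abs_sum_n_m_mult_le {K : AbsRing} (a x : nat -> K) n m :
  abs (sum_n_m (fun j => mult (a j) (x j)) n m) <=
  sum_n_m (fun j => abs (a j) * abs (x j)) n m.
Proof.
  eapply Rle_trans;
    [exact (norm_sum_n_m (V := AbsRing_NormedModule K) (fun j => mult (a j) (x j)) n m)|].
  apply sum_n_m_le; intro; apply abs_mult.
Qed.

Lemma abs_sum_n_minus_lim_le {K : AbsRing} (f : nat -> K) (l : K) N C :
  is_series (V := AbsRing_NormedModule K) f l ->
  (forall m, abs (sum_n_m f (S N) m) <= C) ->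
  abs (minus (sum_n f N) l) <= C.
Proof.
  intros hs hC; apply Rle_plus_epsilon; intros d hd.
  destruct (proj1 (filterlim_locally _ _) hs (mkposreal d hd)) as [N0 hN0].
  set (m := max N0 (S N)).
  specialize (hN0 m (Nat.le_max_l _ _)); specialize (hC m).
  rewrite (sum_n_m_sum_n (G := AbsRing.AbelianGroup K)), abs_minus in hC
    by (unfold m; lia).
  eapply Rle_trans; [apply (abs_minus_triangle _ (sum_n f m))|].
  apply Rplus_le_compat; [exact hC | left; exact hN0].
Qed.

Lemma exp_convex t A B : 0 <= t <= 1 ->
  exp (t * A + (1 - t) * B) <= t * exp A + (1 - t) * exp B.
Proof.
  intros ht; set (m := t * A + (1 - t) * B).
  assert (tangent : forall y, exp m * (1 + (y - m)) <= exp y).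
  { intro y; replace (exp y) with (exp m * exp (y - m)) by (rewrite <- exp_plus; f_equal; ring).
    apply Rmult_le_compat_l; [left; apply exp_pos | apply exp_ineq1_le]. }
  assert (e : exp m = t * (exp m * (1 + (A - m))) + (1 - t) * (exp m * (1 + (B - m))))
    by (unfold m; ring).
  rewrite e; apply Rplus_le_compat; apply Rmult_le_compat_l; try apply tangent; lra.
Qed.

Lemma young p q u v : 1 < p -> 1 < q -> / p + / q = 1 -> 0 <= u -> 0 <= v ->
  u * v <= rpow u p / p + rpow v q / q.
Proof.
  intros hp hq hpq hu hv.
  assert (0 < / p) by (apply Rinv_0_lt_compat; lra).
  assert (0 < / q) by (apply Rinv_0_lt_compat; lra).
  pose proof (rpow_ge0 u p); pose proof (rpow_ge0 v q).
  destruct (Req_dec u 0) as [->|hu0]; [unfold Rdiv; nra|].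
  destruct (Req_dec v 0) as [->|hv0]; [unfold Rdiv; nra|].
  rewrite !rpow_pos by lra; unfold Rpower.
  pose proof (exp_convex (/ p) (p * ln u) (q * ln v) ltac:(lra)) as h.
  replace (1 - / p) with (/ q) in h by lra.
  replace (/ p * (p * ln u) + / q * (q * ln v)) with (ln u + ln v) in h by (field; lra).
  rewrite exp_plus, !exp_ln in h by lra.
  unfold Rdiv; lra.
Qed.

Lemma holder_sum_n_m (u v : nat -> R) n m p q A B :
  1 < p -> 1 < q -> / p + / q = 1 -> 0 < A -> 0 < B ->
  (forall k, 0 <= u k) -> (forall k, 0 <= v k) ->
  sum_n_m (fun k => rpow (u k) p) n m <= rpow A p ->
  sum_n_m (fun k => rpow (v k) q) n m <= rpow B q ->
  sum_n_m (fun k => u k * v k) n m <= A * B.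
Proof.
  intros hp hq hpq hA hB hu hv hsu hsv.
  pose proof (rpow_gt0 A p hA); pose proof (rpow_gt0 B q hB).
  set (c1 := A * B / (p * rpow A p)); set (c2 := A * B / (q * rpow B q)).
  (* Young's inequality applied to [u k / A] and [v k / B] *)
  assert (hterm : forall k, u k * v k <= c1 * rpow (u k) p + c2 * rpow (v k) q).
  { intro k.
    assert (0 <= u k / A) by (apply Rdiv_le_0_compat; [apply hu | lra]).
    assert (0 <= v k / B) by (apply Rdiv_le_0_compat; [apply hv | lra]).
    pose proof (young p q (u k / A) (v k / B) hp hq hpq ltac:(lra) ltac:(lra)) as hy.
    rewrite !rpow_div in hy by (auto; lra).
    replace (u k * v k) with (A * B * (u k / A * (v k / B))) by (field; lra).
    replace (c1 * rpow (u k) p + c2 * rpow (v k) q) with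
      (A * B * (rpow (u k) p / rpow A p / p + rpow (v k) q / rpow B q / q))
      by (unfold c1, c2; field; lra).
    apply Rmult_le_compat_l; [nra | exact hy]. }
  eapply Rle_trans; [apply sum_n_m_le, hterm|].
  rewrite (sum_n_m_plus (fun k => c1 * _) (fun k => c2 * _)).
  unfold plus; simpl; rewrite !sum_n_m_Rmult_l.
  assert (0 <= c1) by (apply Rdiv_le_0_compat; nra).
  assert (0 <= c2) by (apply Rdiv_le_0_compat; nra).
  apply Rle_trans with (c1 * rpow A p + c2 * rpow B q).
  { apply Rplus_le_compat; apply Rmult_le_compat_l; assumption. }
  unfold c1, c2; replace (_ + _) with (A * B * (/ p + / q)) by (field; lra).
  rewrite hpq; lra.
Qed.

Definition pos_exponent (q : Rbar) : Prop :=
  match q with Finite q' => 0 < q' | _ => True end.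

Lemma conjugate_pair_pos_exponent (p : R) (q : Rbar) :
  conjugate_pair p q -> pos_exponent q.
Proof. intros [[_ [q' [-> [hq _]]]] | [_ ->]]; simpl; [lra | exact I]. Qed.

(* The closed ball of radius [M] of [l^q], described by conditions on finitely
   many coordinates at a time. *)
Definition lq_ball {K : AbsRing} (q : Rbar) (M : R) (x : nat -> K) : Prop :=
  match q with
  | Finite q' => forall n, sum_n (fun j => rpow (abs (x j)) q') n <= rpow M q'
  | _ => forall j, abs (x j) <= M
  end.

Lemma Sup_seq_abs_bounded {K : AbsRing} (x : nat -> K) B : (forall j, abs (x j) <= B) ->
  exists s, Sup_seq (fun j => Finite (abs (x j))) = Finite s /\
    (forall j, abs (x j) <= s) /\ s <= B.
Proof.
  intro hB; pose proof (Sup_seq_correct (fun j => Finite (abs (x j)))) as h.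
  pose proof (fun j => is_sup_seq_major _ _ j h) as hub.
  assert (hlub := proj2 (is_sup_seq_lub _ _ h) B).
  destruct (Sup_seq _) as [s| |]; simpl in hub, hlub.
  - exists s; split; [reflexivity | split; [exact hub | apply hlub]].
    intros _ [n ->]; apply hB.
  - destruct hlub; intros _ [n ->]; apply hB.
  - destruct (hub 0%nat).
Qed.

Lemma lq_ball_of_lp_norm_le {K : AbsRing} q M (x : nat -> K) :
  pos_exponent q -> in_lp q x -> lp_norm q x <= M -> lq_ball q M x.
Proof.
  destruct q as [q'| |]; simpl; intros hq hin hn.
  2-3: destruct hin as [B hB]; destruct (Sup_seq_abs_bounded x B hB) as [s [e [h1 _]]];
    rewrite e in hn; simpl in hn; intro j; specialize (h1 j); lra.
  intro n; set (u := fun j => rpow (abs (x j)) q') in *.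
  pose proof (is_lim_seq_incr_compare _ _ (Series_correct u hin)
                (sum_n_incr u (fun j => rpow_ge0 _ _)) n) as h1.
  assert (h0 : 0 <= Series u).
  { eapply Rle_trans; [|exact h1]; apply sum_n_m_nonneg; intro; apply rpow_ge0. }
  rewrite <- (rpow_rpow_inv (Series u) (/ q')), Rinv_inv in h1
    by (try apply Rinv_neq_0_compat; lra).
  eapply Rle_trans; [exact h1|]; apply rpow_le; [lra|].
  split; [apply rpow_ge0 | exact hn].
Qed.

Lemma lp_norm_le_of_lq_ball {K : AbsRing} q M (x : nat -> K) :
  pos_exponent q -> 0 < M -> lq_ball q M x -> in_lp q x /\ lp_norm q x <= M.
Proof.
  destruct q as [q'| |]; simpl; intros hq hM hB.
  2-3: split; [exists M; exact hB|];
    destruct (Sup_seq_abs_bounded x M hB) as [s [-> [_ hs]]]; exact hs.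
  set (u := fun j => rpow (abs (x j)) q') in *.
  pose proof (sum_n_incr u (fun j => rpow_ge0 _ _)) as hincr.
  pose proof (Lim_seq_correct _ (ex_lim_seq_incr _ hincr)) as hl.
  pose proof (is_lim_seq_le _ _ _ _ hB hl (is_lim_seq_const (rpow M q'))) as hle.
  assert (hge : Rbar_le 0 (Lim_seq (sum_n u))).
  { apply (is_lim_seq_le (fun _ => 0) (sum_n u)); [|apply is_lim_seq_const | exact hl].
    intro; apply sum_n_m_nonneg; intro; apply rpow_ge0. }
  destruct (Lim_seq (sum_n u)) as [l| |]; simpl in hle, hge; try contradiction.
  split; [exists l; exact hl|].
  rewrite (is_series_unique u l hl), <- (rpow_rpow_inv M q') by lra.
  apply rpow_le; [apply Rinv_0_lt_compat; lra | split; assumption].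
Qed.

Lemma lq_ball_abs_le {K : AbsRing} q M (x : nat -> K) :
  pos_exponent q -> 0 < M -> lq_ball q M x -> forall j, abs (x j) <= M.
Proof.
  destruct q as [q'| |]; simpl; intros hq hM hB j; try apply hB.
  apply (rpow_le_inv _ _ q'); [lra | lra |].
  eapply Rle_trans; [|apply (hB j)].
  rewrite <- (sum_n_n (fun k => rpow (abs (x k)) q') j).
  apply sum_n_m_le_sum_n; intro; apply rpow_ge0.
Qed.

Lemma holder_lq_ball {K : AbsRing} p q M (Hpq : conjugate_pair p q) (a x : nat -> K) n m T :
  0 < M -> 0 < T -> lq_ball q M x ->
  sum_n_m (fun j => rpow (abs (a j)) p) n m <= rpow T p ->
  abs (sum_n_m (fun j => mult (a j) (x j)) n m) <= T * M.
Proof.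
  intros hM hT hB ha; eapply Rle_trans; [apply abs_sum_n_m_mult_le|].
  destruct Hpq as [[hp [q' [-> [hq hpq]]]] | [-> ->]]; simpl in hB.
  - apply (holder_sum_n_m _ _ n m p q' T M hp hq hpq hT hM); try (intro; apply abs_ge_0).
    + exact ha.
    + eapply Rle_trans; [|apply (hB m)].
      apply sum_n_m_le_sum_n; intro; apply rpow_ge0.
  - rewrite (sum_n_m_ext (fun j => rpow (abs (a j)) 1) (fun j => abs (a j))) in ha
      by (intro; apply rpow_1, abs_ge_0).
    rewrite rpow_1 in ha by lra.
    apply Rle_trans with (sum_n_m (fun j => M * abs (a j)) n m).
    + apply sum_n_m_le; intro k; rewrite (Rmult_comm M).
      apply Rmult_le_compat_l; [apply abs_ge_0 | apply hB].
    + rewrite sum_n_m_Rmult_l; nra.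
Qed.

(* [x] looks like an [e]-approximate solution of [sum_j a_j x_j = b] from its
   partial sums: the [N]-th one is within [e + M T] of [b] whenever [T] bounds
   the [l^p] norm of the tail [(a_j)_(j > N)]. *)
Definition partial_sum_approx {K : AbsRing} (p M e : R) (a : nat -> K) (b : K)
    (x : nat -> K) : Prop :=
  forall N T, 0 < T -> (forall m, sum_n_m (fun j => rpow (abs (a j)) p) (S N) m <= rpow T p) ->
    abs (minus (sum_n (fun j => mult (a j) (x j)) N) b) <= e + M * T.

Lemma partial_sum_approx_of_lin_sum_is {K : AbsRing} p q M e (Hpq : conjugate_pair p q)
    (a x : nat -> K) (b l : K) :
  0 < M -> lq_ball q M x -> lin_sum_is a x l -> abs (minus l b) <= e ->
  partial_sum_approx p M e a b x.
Proof.
  intros hM hB hl hlb N T hT ha.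
  assert (htail : abs (minus (sum_n (fun j => mult (a j) (x j)) N) l) <= T * M).
  { apply abs_sum_n_minus_lim_le; [exact hl|].
    intro m; apply (holder_lq_ball p q M Hpq); auto. }
  eapply Rle_trans; [apply (abs_minus_triangle _ l)|]; rewrite (Rmult_comm M), (Rplus_comm e).
  apply Rplus_le_compat; [exact htail | exact hlb].
Qed.

Lemma lin_sum_is_of_partial_sum_approx {K : AbsRing} p M (a x : nat -> K) (b : K) :
  0 < M -> in_lp (Finite p) a -> (forall e, 0 < e -> partial_sum_approx p M e a b x) ->
  lin_sum_is a x b.
Proof.
  intros hM ha hP; apply (proj2 (filterlim_locally _ _)); intros [eps heps].
  set (eta := eps / (4 * M)).
  assert (heta : 0 < eta) by (apply Rdiv_lt_0_compat; lra).
  destruct (ex_series_tail_le _ ha _ (rpow_gt0 eta p heta))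
    as [N0 HN0].
  exists N0; intros N hN; simpl.
  pose proof (hP (eps / 4) ltac:(lra) N eta heta (HN0 N hN)) as h.
  replace (M * eta) with (eps / 4) in h by (unfold eta; field; lra).
  apply (Rle_lt_trans _ _ _ h); lra.
Qed.

(* [P] is closed in the product topology of [K^nat]. *)
Definition coord_closed {K : AbsRing} (P : (nat -> K) -> Prop) : Prop :=
  forall x, (forall N d, 0 < d -> exists y, P y /\
    forall j, (j <= N)%nat -> abs (minus (y j) (x j)) < d) -> P x.

Lemma coord_closed_forall {K : AbsRing} (J : Type) (P : J -> (nat -> K) -> Prop) :
  (forall j, coord_closed (P j)) -> coord_closed (fun x => forall j, P j x).
Proof.
  intros hP x H j; apply (hP j); intros N d hd.
  destruct (H N d hd) as [y [Py hy]]; exists y; auto.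
Qed.

Lemma coord_closed_imply {K : AbsRing} (A : Prop) (P : (nat -> K) -> Prop) :
  (A -> coord_closed P) -> coord_closed (fun x => A -> P x).
Proof.
  intros hP x H hA; apply (hP hA); intros N d hd.
  destruct (H N d hd) as [y [Py hy]]; exists y; auto.
Qed.

Lemma coord_closed_abs_le {K : AbsRing} j M : coord_closed (fun x : nat -> K => abs (x j) <= M).
Proof.
  intros x H; apply Rle_plus_epsilon; intros d hd.
  destruct (H j d hd) as [y [hy hxy]].
  pose proof (abs_le_plus_abs_minus (x j) (y j)) as htri.
  rewrite abs_minus in htri; specialize (hxy j (le_n _)); lra.
Qed.

Lemma coord_closed_sum_rpow_le {K : AbsRing} r C n : 0 < r ->
  coord_closed (fun x : nat -> K => sum_n (fun j => rpow (abs (x j)) r) n <= C).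
Proof.
  intros hr x H; apply (Rle_plus_scaled_epsilon _ _ (INR (S n))); [apply pos_INR|].
  intros e he.
  destruct (exists_common_delta (fun j d => forall t, 0 <= t -> abs (x j) - d < t ->
               rpow (abs (x j)) r <= rpow t r + e) n) as [d [hd Hd]].
  { intros j d d' hdd h t ht hlt; apply h; lra. }
  { intros j _; apply rpow_lower_semicontinuous; [exact hr | apply abs_ge_0 | exact he]. }
  destruct (H n d hd) as [y [hy hxy]].
  eapply Rle_trans; [apply (sum_n_le_loc _ (fun j => rpow (abs (y j)) r + e) n)|].
  - intros j hj; apply Hd; [exact hj | apply abs_ge_0|].
    pose proof (abs_le_plus_abs_minus (x j) (y j)) as htri; rewrite abs_minus in htri.
    specialize (hxy j hj); lra.
  - rewrite sum_n_plus_const; lra.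
Qed.

Lemma coord_closed_lq_ball {K : AbsRing} q M :
  pos_exponent q -> coord_closed (fun x : nat -> K => lq_ball q M x).
Proof.
  destruct q as [q'| |]; simpl; intro hq; apply coord_closed_forall; intro j.
  - apply coord_closed_sum_rpow_le, hq.
  - apply coord_closed_abs_le.
  - apply coord_closed_abs_le.
Qed.

Lemma coord_closed_partial_sum {K : AbsRing} (a : nat -> K) (b : K) N c :
  coord_closed (fun x => abs (minus (sum_n (fun j => mult (a j) (x j)) N) b) <= c).
Proof.
  intros x H; set (A := sum_n (fun j => abs (a j)) N).
  apply (Rle_plus_scaled_epsilon _ _ A).
  { apply sum_n_m_nonneg; intro; apply abs_ge_0. }
  intros d hd; destruct (H N d hd) as [y [hy hxy]].
  set (Sy := sum_n (fun j => mult (a j) (y j)) N).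
  assert (hdiff : abs (minus (sum_n (fun j => mult (a j) (x j)) N) Sy) <= A * d).
  { eapply Rle_trans; [apply abs_minus_sum_n_le|].
    unfold A, sum_n; rewrite Rmult_comm, <- sum_n_m_Rmult_l.
    apply sum_n_le_loc; intros j hj.
    change (abs (minus (scal (V := AbsRing_NormedModule K) (a j) (x j)) (scal (a j) (y j))) <= d * abs (a j)).
    rewrite <- scal_minus_distr_l.
    eapply Rle_trans; [apply abs_mult|]; rewrite Rmult_comm.
    apply Rmult_le_compat_r; [apply abs_ge_0|].
    change (abs (minus (x j) (y j)) <= d); rewrite abs_minus; left; apply hxy, hj. }
  eapply Rle_trans; [apply (abs_minus_triangle _ Sy)|]; rewrite Rplus_comm.
  apply Rplus_le_compat; [exact hy | exact hdiff].
Qed.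

Lemma coord_closed_partial_sum_approx {K : AbsRing} p M e (a : nat -> K) b :
  coord_closed (partial_sum_approx p M e a b).
Proof.
  apply coord_closed_forall; intro N; apply coord_closed_forall; intro T.
  do 2 (apply coord_closed_imply; intros _).
  apply coord_closed_partial_sum.
Qed.

(* Tychonoff's theorem for the cubes of [K^nat], in finite intersection form. *)
Definition cube_compact (K : AbsRing) : Prop :=
  forall (J : Type) (P : J -> (nat -> K) -> Prop) (M : R),
  (forall j, coord_closed (P j)) ->
  (forall L : list J, exists x, (forall n, abs (x n) <= M) /\ forall j, In j L -> P j x) ->
  exists x, forall j, P j x.

Lemma finite_tolerance {I : Type} (L : list (option (I * posreal))) :
  exists (S : list I) (eps : posreal), forall i e, In (Some (i, e)) L -> In i S /\ eps <= e.
Proof.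
  induction L as [|c L [S [eps H]]].
  { exists nil, (mkposreal 1 Rlt_0_1); intros i e []. }
  destruct c as [[i e]|].
  - exists (i :: S), (mkposreal _ (Rmin_pos eps e (cond_pos eps) (cond_pos e))); simpl.
    intros i' e' [h|h].
    + injection h as -> ->; split; [left; reflexivity | apply Rmin_r].
    + destruct (H i' e' h); split; [right; assumption|].
      eapply Rle_trans; [apply Rmin_l | assumption].
  - exists S, eps; intros i' e' [h|h]; [discriminate | auto].
Qed.

Lemma exact_solution_of_cube_compact (K : AbsRing) (HK : cube_compact K)
  (p : R) (q : Rbar) (Hpq : conjugate_pair p q)
  (I : Type) (a : I -> nat -> K) (Ha : forall i, in_lp (Finite p) (a i))
  (b : I -> K) (M : R) (HM : 0 < M)
  (Happrox : forall (S : list I) (eps : R), 0 < eps ->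
     exists x : nat -> K, in_lp q x /\ lp_norm q x <= M /\
       forall i, In i S -> exists l : K, lin_sum_is (a i) x l /\ abs (minus l (b i)) <= eps) :
  exists x : nat -> K, in_lp q x /\ lp_norm q x <= M /\
    forall i : I, lin_sum_is (a i) x (b i).
Proof.
  pose proof (conjugate_pair_pos_exponent p q Hpq) as hq.
  set (C := fun (c : option (I * posreal)) (x : nat -> K) =>
    match c with
    | None => lq_ball q M x
    | Some (i, e) => partial_sum_approx p M e (a i) (b i) x
    end).
  destruct (HK _ C M) as [x Hx].
  - intros [[i e]|]; [apply coord_closed_partial_sum_approx | apply coord_closed_lq_ball, hq].
  - intro L; destruct (finite_tolerance L) as [S [eps HS]].
    destruct (Happrox S eps (cond_pos eps)) as [x [hin [hn hS]]].
    pose proof (lq_ball_of_lp_norm_le q M x hq hin hn) as hB.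
    exists x; split; [exact (lq_ball_abs_le q M x hq HM hB)|].
    intros [[i e]|] hL; [|exact hB].
    destruct (HS i e hL) as [hi he]; destruct (hS i hi) as [l [hl hlb]].
    apply (partial_sum_approx_of_lin_sum_is p q M e Hpq _ _ _ l HM hB hl); lra.
  - destruct (lp_norm_le_of_lq_ball q M x hq HM (Hx None)) as [hin hn].
    exists x; split; [exact hin | split; [exact hn|]]; intro i.
    apply (lin_sum_is_of_partial_sum_approx p M _ _ _ HM (Ha i)); intros e he.
    exact (Hx (Some (i, mkposreal e he))).
Qed.

From mathcomp Require all_boot interval.
From mathcomp Require classical_sets filter topology function_spaces normedtype.
From mathcomp Require Rstruct Rstruct_topology.

Module CubeCompactness.
Import all_boot interval classical_sets filter topology function_spaces normedtype.
Import Rstruct Rstruct_topology ArrowAsProduct.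
Local Open Scope classical_set_scope.
Local Open Scope R_scope.

Lemma nbhs_coord_box (T : topologicalType) (dist : T -> T -> R)
  (nbhs_dist : forall t (d : R), 0 < d -> nbhs t [set z | dist z t < d])
  (x : nat -> T) (N : nat) (d : R) : 0 < d ->
  nbhs x [set y | forall k, (k <= N)%coq_nat -> dist (y k) (x k) < d].
Proof.
move=> hd; have proj k : nbhs x [set y | dist (y k) (x k) < d].
  exact: (@proj_continuous nat (fun _ => T) k x _ (nbhs_dist _ _ hd)).
elim: N => [|N IH].
  by apply: filterS (proj O) => y hy k /Nat.le_0_r ->.
apply: filterS (filterI IH (proj N.+1)) => y [hN hSN] k.
by case/Nat.le_succ_r => [/hN|->].
Qed.

Lemma common_point_of_fip (T : topologicalType) (dist : T -> T -> R)
  (nbhs_dist : forall t (d : R), 0 < d -> nbhs t [set z | dist z t < d])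
  (A : set T) (hA : compact A) (J : Type) (P : J -> (nat -> T) -> Prop) :
  (forall j x, (forall N d, 0 < d -> exists y, P j y /\
     forall k, (k <= N)%coq_nat -> dist (y k) (x k) < d) -> P j x) ->
  (forall L : list J, exists x, (forall n, A (x n)) /\ forall j, List.In j L -> P j x) ->
  exists x, forall j, P j x.
Proof.
move=> Hcl Hfip.
pose B (L : list J) := [set x : nat -> T | (forall n, A (x n)) /\ forall j, List.In j L -> P j x].
pose F := filter_from setT B.
have FF : Filter F.
  apply: filter_from_filter; first by exists nil.
  move=> L1 L2 _ _; exists (L1 ++ L2) => // x [HA HP]; split; split => // j Hj;
  by apply: HP; apply: List.in_or_app; tauto.
have PF : ProperFilter F.
  by apply: filter_from_proper => // L _; have [x Hx] := Hfip L; exists x.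
have FA : F [set x : nat -> T | forall n, A (x n)] by exists nil => // x [].
have [x [_ clx]] := @tychonoff nat (fun _ => T) (fun _ => A) (fun _ => hA) F PF FA.
exists x => j; apply: Hcl => N d hd.
have [y [[_ Py] Uy]] := clx (B [:: j]) _ (ex_intro2 _ _ [:: j] I (fun _ h => h))
  (nbhs_coord_box _ _ nbhs_dist x N d hd).
by exists y; split => //; apply: Py; left.
Qed.

Lemma compact_Rabs_le (M : R) : compact [set z : R | Rabs z <= M].
Proof.
have -> : [set z : R | Rabs z <= M] = [set z | z \in (Interval (BLeft (- M)) (BRight M) : interval R)].
  apply/seteqP; split => z /=; rewrite in_itv /=.
    by move=> h; apply/andP; split; apply/RleP; move: h; split_Rabs; lra.
  by move/andP => [/RleP h1 /RleP h2]; move: h1 h2; split_Rabs; lra.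
exact: segment_compact.
Qed.

Lemma nbhs_Rabs_lt (t d : R) : 0 < d -> nbhs t [set z | Rabs (z - t) < d].
Proof.
move=> /RltP hd; apply: filterS (@nbhsx_ballx _ R t d hd) => z.
by rewrite /ball /= Rabs_minus_sym RabsE RminusE => /RltP.
Qed.

Lemma nbhs_Cmod_lt (t : C) (d : R) : 0 < d ->
  @nbhs _ (R * R)%type t [set z | Cmod (Cminus z t) < d].
Proof.
move=> hd; exists ([set a | Rabs (a - t.1) < d / 2], [set b | Rabs (b - t.2) < d / 2]).
  by split; apply: nbhs_Rabs_lt; lra.
case=> a b /= [ha hb]; apply: Rle_lt_trans (Cmod_2Rmax _) _.
have sqrt2_lt_2 : sqrt 2 < 2.
  have e : sqrt 4 = 2 by rewrite (_ : 4 = 2 * 2); [apply: sqrt_square|]; lra.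
  by rewrite -{2}e; apply: sqrt_lt_1; lra.
have hm : Rmax (Rabs (a + - t.1)) (Rabs (b + - t.2)) < d / 2 by apply: Rmax_lub_lt.
have hs := sqrt_pos 2; rewrite /=.
apply: Rle_lt_trans (Rmult_le_compat_l _ _ _ hs (Rlt_le _ _ hm)) _.
apply: Rlt_le_trans (Rmult_lt_compat_r (d / 2) _ _ _ sqrt2_lt_2) _; lra.
Qed.

Lemma cube_compact_R : cube_compact R_AbsRing.
Proof.
move=> J P M Hcl Hfip.
exact: (common_point_of_fip _ _ nbhs_Rabs_lt _ (compact_Rabs_le M)).
Qed.

Lemma cube_compact_C : cube_compact C_AbsRing.
Proof.
move=> J P M Hcl Hfip.
have hA := compact_setX (compact_Rabs_le M) (compact_Rabs_le M).
apply: (common_point_of_fip _ _ nbhs_Cmod_lt _ hA) => [j x H|L]; first exact: Hcl.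
have [x [hM hP]] := Hfip L; exists x; split => // n.
have := hM n; rewrite /abs /= => h; split.
  exact: Rle_trans (re_le_Cmod _) h.
exact: Rle_trans (Rle_trans _ _ _ (Rmax_r _ _) (Rmax_Cmod _)) h.
Qed.

End CubeCompactness.

Theorem theorem2 (K : AbsRing) (HK : K = R_AbsRing \/ K = C_AbsRing)
  (p : R) (q : Rbar) (Hpq : conjugate_pair p q)
  (I : Type) (Hinf : forall S : list I, exists i : I, ~ In i S)
  (a : I -> nat -> K) (Ha : forall i, in_lp (Finite p) (a i))
  (b : I -> K) (M : R) (HM : 0 < M)
  (Happrox : forall (S : list I) (eps : R), 0 < eps ->
     exists x : nat -> K, in_lp q x /\ lp_norm q x <= M /\
       forall i, In i S -> exists l : K, lin_sum_is (a i) x l /\ abs (minus l (b i)) <= eps) :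
  exists x : nat -> K, in_lp q x /\ lp_norm q x <= M /\
    forall i : I, lin_sum_is (a i) x (b i).
Proof.
  destruct HK as [e | e]; subst K.
  - exact (exact_solution_of_cube_compact _ CubeCompactness.cube_compact_R
             p q Hpq I a Ha b M HM Happrox).
  - exact (exact_solution_of_cube_compact _ CubeCompactness.cube_compact_C
             p q Hpq I a Ha b M HM Happrox).
Qed.
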